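(* For all integers $d\geq 2$ and $\Delta\geq 2$, there exists a connected bipartite graph $G$ with $\mathrm{diam}(G)=d$ and $\Delta(G)=\Delta$ such that $G$ admits an interval edge coloring (i.e. $G\in\mathfrak{N}$) and $W(G)=d(\Delta-1)+1$.
   Context: All graphs are finite, undirected, without loops or multiple edges. $\Delta(G)$ denotes the maximum degree of $G$ and $\mathrm{diam}(G)$ its diameter. For a positive integer $t$, an interval $t$-coloring of a graph $G$ is a map assigning to each edge of $G$ a color from $\{1,2,\ldots,t\}$ such that every color $i\in\{1,\ldots,t\}$ is used on at least one edge, edges sharing a vertex receive distinct colors, and for each vertex $v$ the set of colors of edges incident to $v$ is an interval of consecutive integers. $\mathfrak{N}$ denotes the set of graphs that admit an interval $t$-coloring for some $t$, and for $G\in\mathfrak{N}$, $W(G)$ denotes the greatest $t$ for which $G$ has an interval $t$-coloring. *)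

From mathcomp Require Import all_boot.
Set Implicit Arguments. Unset Strict Implicit. Unset Printing Implicit Defensive.

Definition simple_graph (T : finType) (e : rel T) : Prop :=
  symmetric e /\ irreflexive e.

Definition walk_len (T : finType) (e : rel T) (x y : T) (n : nat) : Prop :=
  exists p : seq T, [/\ size p = n, path e x p & last x p = y].

Definition is_dist (T : finType) (e : rel T) (x y : T) (k : nat) : Prop :=
  walk_len e x y k /\ forall n, walk_len e x y n -> k <= n.

Definition connected_graph (T : finType) (e : rel T) : Prop :=
  forall x y : T, exists n, walk_len e x y n.

Definition diam_is (T : finType) (e : rel T) (d : nat) : Prop :=
  (forall x y : T, exists k, k <= d /\ is_dist e x y k) /\
  (exists x y : T, is_dist e x y d).

Definition bipartite (T : finType) (e : rel T) : Prop :=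
  exists f : T -> bool, forall x y, e x y -> f x != f y.

Definition degree (T : finType) (e : rel T) (v : T) : nat := #|[set u | e v u]|.

Definition max_degree (T : finType) (e : rel T) : nat := \max_(v : T) degree e v.

Definition interval_coloring (T : finType) (e : rel T) (t : nat)
  (c : T -> T -> nat) : Prop :=
  [/\ 0 < t,
      (forall x y, e x y -> c x y = c y x),
      (forall x y, e x y -> 1 <= c x y <= t),
      (forall i, 1 <= i <= t -> exists x y, e x y /\ c x y = i) &
      (forall x y z, e x y -> e x z -> y != z -> c x y != c x z)] /\
      (forall v a b k, (exists u, e v u /\ c v u = a) ->
                       (exists u, e v u /\ c v u = b) -> a <= k <= b ->
                       exists u, e v u /\ c v u = k).

Definition has_interval_coloring (T : finType) (e : rel T) (t : nat) : Prop :=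
  exists c, interval_coloring e t c.

Definition in_N (T : finType) (e : rel T) : Prop :=
  exists t, has_interval_coloring e t.

Definition W_is (T : finType) (e : rel T) (w : nat) : Prop :=
  has_interval_coloring e w /\ forall t, has_interval_coloring e t -> t <= w.

From mathcomp Require Import all_boot zify.
From Stdlib Require Import Classical.
Set Implicit Arguments. Unset Strict Implicit. Unset Printing Implicit Defensive.

(* Upper bound: let every two vertices of a bipartite graph of maximum degree D be
   joined by a walk of length at most m.  The colours at a vertex form an interval of
   at most D values, so along a walk the colour changes by at most D - 1 per edge.
   Of the two ends of the edge coloured t, one is reached from an end of the edge
   coloured 1 by a walk of length < m (the two walks have different parities), hence
   t <= m (D - 1) + 1.
   Lower bound: with s = D - 1 and M = (d - 1) s, an explicit bipartite graph on two
   copies of {0, ..., M} in which index k sees exactly the colours k + 1, ..., k + s + 1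
   is (s + 1)-regular and interval coloured with M + s + 1 = d (D - 1) + 1 colours.
   Any two vertices are joined by a walk of length at most d (each step moves an index
   by s), so the upper bound gives W = d (D - 1) + 1; and a diameter below d would
   force W <= (d - 1)(D - 1) + 1, so the diameter is exactly d. *)

Lemma card_ge_of_surj_iota (T : finType) (S : {set T}) (g : T -> nat) lo len :
  (forall k, lo <= k < lo + len -> exists2 x, x \in S & g x = k) -> len <= #|S|.
Proof.
move=> g_onto; rewrite cardE -(size_map g) -{1}(size_iota lo len).
apply: uniq_leq_size; first exact: iota_uniq.
by move=> k; rewrite mem_iota => /g_onto [x xS <-]; apply: map_f; rewrite mem_enum.
Qed.

Lemma card_le_of_inj_iota (T : finType) (S : {set T}) (g : T -> nat) lo len :
  {in S &, injective g} -> (forall x, x \in S -> lo <= g x < lo + len) ->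
  #|S| <= len.
Proof.
move=> g_inj g_range; rewrite cardE -(size_map g) -(size_iota lo len).
apply: uniq_leq_size.
  by rewrite map_inj_in_uniq ?enum_uniq // => x y; rewrite !mem_enum; apply: g_inj.
by move=> k /mapP [x]; rewrite mem_enum mem_iota => /g_range + ->.
Qed.

Section Walks.
Variables (T : finType) (e : rel T).

Lemma walk_cons x y z n : e x y -> walk_len e y z n -> walk_len e x z n.+1.
Proof. by move=> exy [p [sp pp lp]]; exists (y :: p); rewrite /= exy sp pp lp. Qed.

Lemma walk_rcons x y z n : walk_len e x y n -> e y z -> walk_len e x z n.+1.
Proof.
move=> [p [sp pp lp]] eyz; exists (rcons p z).
by rewrite size_rcons rcons_path last_rcons pp lp eyz sp.
Qed.

Lemma walk_len_hom (T' : finType) (e' : rel T') (f : T -> T') x y n :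
  {homo f : u v / e u v >-> e' u v} -> walk_len e x y n -> walk_len e' (f x) (f y) n.
Proof.
move=> f_hom [p [sp pp lp]]; exists (map f p).
by rewrite size_map last_map lp sp (homo_path f_hom pp).
Qed.

Lemma walk_len_dist x y n : walk_len e x y n -> exists2 k, k <= n & is_dist e x y k.
Proof.
elim: n {-2}n (leqnn n) => [|N IH] n le_nN wn.
  by move: le_nN wn; rewrite leqn0 => /eqP -> w0; exists 0.
have [[m [lt_mn wm]] | no_shorter] := classic (exists m, m < n /\ walk_len e x y m).
  have [|k le_km dk] := IH m _ wm; first by lia.
  by exists k; first exact: leq_trans le_km (ltnW lt_mn).
exists n => //; split=> // m wm; rewrite leqNgt; apply/negP => lt_mn.
by apply: no_shorter; exists m.
Qed.

Lemma bipartite_path_parity (f : T -> bool) :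
  (forall x y, e x y -> f x != f y) ->
  forall p x, path e x p -> f (last x p) = f x (+) odd (size p).
Proof.
move=> f_edge; elim=> [|y p IH] x /=; first by rewrite addbF.
case/andP=> exy /IH ->; move: (f_edge _ _ exy).
by case: (f x); case: (f y); case: (odd (size p)).
Qed.

End Walks.

Section IntervalColoringBound.
Variables (T : finType) (e : rel T) (t D : nat) (c : T -> T -> nat).
Hypotheses (e_sym : symmetric e) (c_int : interval_coloring e t c)
  (deg_le : forall v, degree e v <= D).

Lemma interval_coloring_spread v x y : e v x -> e v y -> c v x <= c v y + (D - 1).
Proof.
move=> evx evy; have [_ c_interval] := c_int.
rewrite leqNgt; apply/negP => lt_yx.
have : c v x - c v y + 1 <= degree e v.
  apply: (@card_ge_of_surj_iota _ _ (c v) (c v y)) => k k_range.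
  have [|||u [evu <-]] := c_interval v (c v y) (c v x) k; [by exists y | by exists x | lia |].
  by exists u; rewrite ?inE.
by have := deg_le v; lia.
Qed.

(* Consecutive edges of a walk share a vertex, so their colours differ by at most D - 1. *)
Lemma interval_coloring_path_bound p x y z :
  path e x p -> e x y -> e (last x p) z ->
  c (last x p) z <= c x y + (size p).+1 * (D - 1).
Proof.
have [[_ c_sym _ _ _] _] := c_int.
elim: p x y => [|x1 p IH] x y /=.
  by move=> _ exy exz; rewrite mul1n interval_coloring_spread.
case/andP=> ex1 p_path exy ez.
have := interval_coloring_spread ex1 exy; rewrite (c_sym _ _ ex1).
have := IH x1 x p_path (_ : e x1 x) ez; rewrite e_sym => /(_ ex1).
by rewrite mulSn; lia.
Qed.

Lemma interval_coloring_bound m : bipartite e ->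
  (forall x y, exists k, k <= m /\ walk_len e x y k) -> t <= m * (D - 1) + 1.
Proof.
move=> [f f_edge] walks; have [[t_gt0 c_sym _ c_onto _] _] := c_int.
have [u1 [v1 [e1 c1]]] := c_onto 1 t_gt0.
have [u2 [v2 [e2 c2]]] : exists x y, e x y /\ c x y = t by apply: c_onto; rewrite t_gt0 /=.
have [a [le_am [p1 [sp1 pp1 lp1]]]] := walks u1 u2.
have [b [le_bm [p2 [sp2 pp2 lp2]]]] := walks u1 v2.
(* By parity, one end of the edge coloured t is reached from u1 in fewer than m steps. *)
have a_neq_b : a != b.
  apply/eqP => eq_ab; move: (f_edge _ _ e2).
  rewrite -lp1 -lp2 (bipartite_path_parity f_edge pp1) (bipartite_path_parity f_edge pp2).
  by rewrite sp1 sp2 eq_ab eqxx.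
have [lt_am | lt_bm] : a < m \/ b < m by lia.
  have := interval_coloring_path_bound (z := v2) pp1 e1.
  rewrite lp1 c1 c2 sp1 => /(_ e2).
  have : a.+1 * (D - 1) <= m * (D - 1) by rewrite leq_mul2r lt_am orbT.
  lia.
have := interval_coloring_path_bound (z := u2) pp2 e1.
rewrite lp2 c1 -(c_sym _ _ e2) c2 sp2 e_sym => /(_ e2).
have : b.+1 * (D - 1) <= m * (D - 1) by rewrite leq_mul2r lt_bm orbT.
lia.
Qed.

Lemma diam_is_of_interval_coloring m : bipartite e -> m * (D - 1) + 1 < t ->
  (forall x y, exists k, k <= m.+1 /\ walk_len e x y k) -> diam_is e m.+1.
Proof.
move=> e_bip lt_t walks.
have dists x y : exists k, k <= m.+1 /\ is_dist e x y k.
  have [k [le_km wk]] := walks x y; have [k' le_k'k dk'] := walk_len_dist wk.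
  by exists k'; rewrite (leq_trans le_k'k).
split=> //; apply: NNPP => no_far; move: lt_t; rewrite ltnNge => /negP; apply.
apply: interval_coloring_bound => // x y.
have [k [le_km [wk k_min]]] := dists x y; exists k; split=> //.
by case: ltngtP le_km => // eq_km _; case: no_far; exists x, y; rewrite -eq_km.
Qed.

End IntervalColoringBound.

Section Construction.
Variables s M : nat.

(* Two copies of {0, ..., M}; index k of one copy is joined to index l of the other
   iff |k - l| <= s and either k + l <= s, k + l >= 2M - s, or k + l + s is even.
   The colours of the edges at index k are then exactly k + 1, ..., k + s + 1. *)
Definition idx_adj (k l : nat) : bool :=
  [&& k <= l + s, l <= k + s &
      [|| k + l <= s, M + M <= k + l + s | ~~ odd (k + l + s)]].

Definition idx_color (k l : nat) : nat :=
  if k + l <= s then k + l + 1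
  else if M + M <= k + l + s then k + l + s + 1 - M
  else (k + l + s + 2) %/ 2.

Lemma idx_adj_sym k l : idx_adj k l = idx_adj l k.
Proof. by apply/idP/idP; rewrite /idx_adj; lia. Qed.

Lemma idx_color_sym k l : idx_color k l = idx_color l k.
Proof. by rewrite /idx_color addnC. Qed.

(* The reflection k |-> M - k swaps the two boundary regimes. *)
Lemma idx_adj_reflect k l : k <= M -> l <= M -> idx_adj (M - k) (M - l) = idx_adj k l.
Proof.
move=> le_kM le_lM; rewrite /idx_adj.
have -> : odd (M - k + (M - l) + s) = odd (k + l + s).
  by rewrite !oddD !oddB //; case: (odd M); case: (odd k); case: (odd l).
by apply/idP/idP; lia.
Qed.

Lemma idx_color_range k l : k <= M -> l <= M -> idx_adj k l ->
  k + 1 <= idx_color k l <= k + s + 1.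
Proof.
rewrite /idx_adj /idx_color => le_kM le_lM /and3P [le_k le_l parity].
case: ifP => low; first lia.
by case: ifP parity => high; rewrite ?low /=; lia.
Qed.

Lemma idx_color_inj k l l' : k <= M -> l <= M -> l' <= M ->
  idx_adj k l -> idx_adj k l' -> idx_color k l = idx_color k l' -> l = l'.
Proof.
rewrite /idx_adj /idx_color => le_kM le_lM le_l'M.
move=> /and3P [le_k le_l parity] /and3P [le_k' le_l' parity'].
case: ifP parity => low; case: ifP parity' => low'; rewrite ?low ?low' /=;
  try case: ifP => high; try case: ifP => high'; lia.
Qed.

Local Notation vertex := 'I_(M + M).+2.

Definition side (u : vertex) : bool := u < M.+1.
Definition idx (u : vertex) : nat := if side u then nat_of_ord u else u - M.+1.
Definition vtx (b : bool) (i : nat) : vertex := inord (if b then i else M.+1 + i).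

Definition gadj : rel vertex := fun u v => (side u != side v) && idx_adj (idx u) (idx v).
Definition gcolor (u v : vertex) : nat := idx_color (idx u) (idx v).

Lemma vtx_val b i : i <= M -> nat_of_ord (vtx b i) = if b then i else M.+1 + i.
Proof. by move=> le_iM; rewrite inordK //; case: b; lia. Qed.

Lemma side_vtx b i : i <= M -> side (vtx b i) = b.
Proof. by move=> le_iM; rewrite /side vtx_val //; case: b; lia. Qed.

Lemma idx_vtx b i : i <= M -> idx (vtx b i) = i.
Proof. by move=> le_iM; rewrite /idx side_vtx // vtx_val //; case: b; lia. Qed.

Lemma idx_le (u : vertex) : idx u <= M.
Proof. by rewrite /idx /side; case: ifP; have := ltn_ord u; lia. Qed.

Lemma vtxE (u : vertex) : u = vtx (side u) (idx u).
Proof.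
apply: val_inj; rewrite /= vtx_val ?idx_le // /idx /side.
by case: ltnP; have := ltn_ord u; lia.
Qed.

Lemma gadj_vtx b b' x y : x <= M -> y <= M ->
  gadj (vtx b x) (vtx b' y) = (b != b') && idx_adj x y.
Proof. by move=> le_xM le_yM; rewrite /gadj !side_vtx // !idx_vtx. Qed.

Lemma gadj_sym : symmetric gadj.
Proof. by move=> u v; rewrite /gadj eq_sym idx_adj_sym. Qed.

Lemma gadj_irr : irreflexive gadj.
Proof. by move=> u; rewrite /gadj eqxx. Qed.

Lemma gadj_bipartite : bipartite gadj.
Proof. by exists side => u v /andP []. Qed.

Lemma gcolor_range (u v : vertex) : gadj u v -> idx u + 1 <= gcolor u v <= idx u + s + 1.
Proof. by case/andP=> _; apply: idx_color_range; rewrite ?idx_le. Qed.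

Lemma gcolor_inj (u v w : vertex) : gadj u v -> gadj u w -> gcolor u v = gcolor u w -> v = w.
Proof.
move=> /andP [side_uv adj_uv] /andP [side_uw adj_uw] eq_c.
have eq_idx : idx v = idx w by apply: (idx_color_inj (idx_le u)); rewrite ?idx_le.
have eq_side : side v = side w.
  by move: side_uv side_uw; case: (side u); case: (side v); case: (side w).
by rewrite (vtxE v) (vtxE w) eq_idx eq_side.
Qed.

Definition mirror (u : vertex) : vertex := vtx (side u) (M - idx u).

Lemma gadj_mirror : {homo mirror : u v / gadj u v}.
Proof.
by move=> u v; rewrite /mirror gadj_vtx ?leq_subr // idx_adj_reflect ?idx_le.
Qed.

Lemma mirror_vtx b i : i <= M -> mirror (vtx b i) = vtx b (M - i).
Proof. by move=> le_iM; rewrite /mirror side_vtx ?idx_vtx. Qed.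

Lemma gadj_step b x y : x <= M -> y <= M -> idx_adj x y -> gadj (vtx b x) (vtx (~~ b) y).
Proof. by move=> le_xM le_yM adj_xy; rewrite gadj_vtx // adj_xy; case: b. Qed.

Hypotheses (s_gt0 : 0 < s) (s_le_M : s <= M).

Lemma idx_color_onto k i : k <= M -> k + 1 <= i <= k + s + 1 ->
  exists l, [/\ l <= M, idx_adj k l & idx_color k l = i].
Proof.
move=> le_kM i_range; exists ((i - 1 - s) + minn M (i - 1) - k).
by rewrite /idx_adj /idx_color; case: ifP => low; [|case: ifP => high]; split; lia.
Qed.

Lemma gcolor_onto (u : vertex) i : idx u + 1 <= i <= idx u + s + 1 ->
  exists2 v, gadj u v & gcolor u v = i.
Proof.
move=> i_range; have [l [le_lM adj_l <-]] := idx_color_onto (idx_le u) i_range.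
exists (vtx (~~ side u) l); last by rewrite /gcolor idx_vtx.
by rewrite {1}(vtxE u) gadj_vtx ?idx_le // adj_l; case: (side u).
Qed.

Lemma degree_gadj (u : vertex) : degree gadj u = s.+1.
Proof.
apply/eqP; rewrite eqn_leq; apply/andP; split.
  apply: (@card_le_of_inj_iota _ _ (gcolor u) (idx u + 1)).
    by move=> v w; rewrite !inE; apply: gcolor_inj.
  by move=> v; rewrite inE => /gcolor_range; lia.
apply: (@card_ge_of_surj_iota _ _ (gcolor u) (idx u + 1)) => k k_range.
by have [|v adj_uv <-] := @gcolor_onto u k; [lia | exists v; rewrite ?inE].
Qed.

Lemma gcolor_interval : interval_coloring gadj (M + s + 1) gcolor.
Proof.
split; first split.
- by rewrite addn1.
- by move=> u v _; rewrite /gcolor idx_color_sym.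
- by move=> u v /gcolor_range; have := idx_le u; lia.
- move=> i i_range; pose u := vtx true (minn (i - 1) M).
  have [|v adj_uv <-] := @gcolor_onto u i; last by exists u, v.
  by rewrite /u idx_vtx; lia.
- by move=> u v w adj_uv adj_uw; apply: contra_neq; apply: gcolor_inj.
- move=> u a b k [v [adj_uv <-]] [w [adj_uw <-]] k_range.
  have [|x adj_ux <-] := @gcolor_onto u k; last by exists x.
  by move: (gcolor_range adj_uv) (gcolor_range adj_uw); lia.
Qed.

(* Each step lowers one of the two indices by s, or jumps to index 0. *)
Lemma walk_low t b x y : 0 < t -> x <= M -> y <= M -> x + y <= t * s ->
  walk_len gadj (vtx b x) (vtx (b (+) odd t) y) t.
Proof.
elim: t b x y => // t IH b x y _ le_xM le_yM; rewrite mulSn /= addbN => le_xy.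
have [t0 | t_gt0] := posnP t.
  move: le_xy; rewrite t0 /= addbF mul0n addn0 => le_xy.
  exists [:: vtx (~~ b) y]; split=> //=.
  by rewrite andbT gadj_step // /idx_adj; lia.
have le_st : s <= t * s by rewrite leq_pmull.
have [le_sx | lt_xs] := leqP s x.
  apply: (@walk_cons _ _ _ (vtx (~~ b) (x - s))).
    by apply: gadj_step; rewrite /idx_adj; lia.
  by rewrite -addNb; apply: IH => //; lia.
have [le_sy | lt_ys] := leqP s y.
  apply: (@walk_rcons _ _ _ (vtx (b (+) odd t) (y - s))); first by apply: IH => //; lia.
  by apply: gadj_step; rewrite /idx_adj; lia.
apply: (@walk_cons _ _ _ (vtx (~~ b) 0)).
  by apply: gadj_step; rewrite /idx_adj; lia.
by rewrite -addNb; apply: IH => //; lia.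
Qed.

Lemma walk_high t b x y : 0 < t -> x <= M -> y <= M -> (M - x) + (M - y) <= t * s ->
  walk_len gadj (vtx b x) (vtx (b (+) odd t) y) t.
Proof.
move=> t_gt0 le_xM le_yM le_xy.
have := walk_len_hom gadj_mirror (walk_low b t_gt0 (leq_subr x M) (leq_subr y M) le_xy).
by rewrite !mirror_vtx ?leq_subr // !subKn.
Qed.

Lemma gadj_walks t : M <= t * s ->
  forall u v : vertex, exists k, k <= t.+1 /\ walk_len gadj u v k.
Proof.
move=> le_Mt u v; rewrite (vtxE u) (vtxE v).
have [t' [le_t't parity t'_gt0 le_Mt']] :
    exists t', [/\ t' <= t.+1, side v = side u (+) odd t', 0 < t' & M <= t' * s].
  have t_gt0 : 0 < t by case: t le_Mt => //; rewrite mul0n; lia.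
  have [<- | flip] := eqVneq (side u (+) odd t) (side v); first by exists t.
  exists t.+1; split=> //; last by rewrite (leq_trans le_Mt) // leq_mul2r leqnSn orbT.
  by move: flip; rewrite /= addbN; case: (side v); case: (_ (+) _).
exists t'; split=> //; rewrite parity.
have := idx_le u; have := idx_le v.
have [le_sum | lt_sum] := leqP (idx u + idx v) M => le_vM le_uM.
  by apply: walk_low; rewrite ?(leq_trans le_sum).
by apply: walk_high; rewrite ?(leq_trans _ le_Mt') //; lia.
Qed.

End Construction.

Arguments gadj : clear implicits.
Arguments gcolor : clear implicits.

Lemma max_degree_regular (T : finType) (e : rel T) (D : nat) (v0 : T) :
  (forall v, degree e v = D) -> max_degree e = D.
Proof.
move=> deg_eq; apply/eqP; rewrite eqn_leq; apply/andP; split.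
  by apply/bigmax_leqP => v _; rewrite deg_eq.
by rewrite -(deg_eq v0) (leq_bigmax v0).
Qed.

Theorem theorem6 (d D : nat) (hd : 2 <= d) (hD : 2 <= D) :
  exists (n : nat) (e : rel 'I_n),
    [/\ simple_graph e, connected_graph e, bipartite e,
        diam_is e d & max_degree e = D] /\
    in_N e /\ W_is e (d * (D - 1) + 1).
Proof.
case: d hd => // d d_gt0.
case: D hD => // s s_gt0.
rewrite subSS subn0.
have s_le_M : s <= d * s by rewrite leq_pmull.
pose G := gadj s (d * s).
have G_sym : symmetric G := @gadj_sym s (d * s).
have walks := gadj_walks s_gt0 s_le_M (leqnn (d * s)).
have deg_le v : degree G v <= s.+1 by rewrite degree_gadj.
have col := gcolor_interval s_gt0 s_le_M.
have colors_le t : has_interval_coloring G t -> t <= d * s + s + 1.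
  case=> c c_int; have := interval_coloring_bound G_sym c_int deg_le (gadj_bipartite _ _) walks.
  by rewrite subSS subn0 mulSn; lia.
exists (d * s + d * s).+2, G; split; [split | split].
- by split; [apply: G_sym | apply: gadj_irr].
- by move=> u v; have [k [_ wk]] := walks u v; exists k.
- exact: gadj_bipartite.
- have lt_t : d * (s.+1 - 1) + 1 < d * s + s + 1 by rewrite subSS subn0; lia.
  exact (diam_is_of_interval_coloring G_sym col deg_le (gadj_bipartite _ _) lt_t walks).
- exact: max_degree_regular (vtx (d * s) true 0) (degree_gadj s_gt0 s_le_M).
- by exists (d * s + s + 1), (gcolor s (d * s)).
- rewrite (_ : d.+1 * s = d * s + s); last by rewrite mulSn addnC.
  by split; [exists (gcolor s (d * s)) | exact: colors_le].
Qed.
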